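(* Let $\gamma_0:[1,2]\to\mathbf{C}$ be the piecewise affine path with $\gamma_0(1)=-2+i$, $\gamma_0(1.25)=1+i$, $\gamma_0(1.5)=1-i$, $\gamma_0(1.75)=-1-i$, $\gamma_0(2)=-1+2i$, affine on each of the intervals $[1,1.25],[1.25,1.5],[1.5,1.75],[1.75,2]$. Then every continuous path $\gamma:[1,2]\to\mathbf{C}$ with $\sup_{t\in[1,2]}|\gamma(t)-\gamma_0(t)|<1/2$ separates $0$ from $\infty$, i.e. $0$ lies in a bounded connected component of $\mathbf{C}\setminus\gamma([1,2])$. *)

(* The complex plane C is modelled as R * R
   (R : realType), with its product topology (= Euclidean topology). *)
From HB Require Import structures.
From mathcomp Require Import all_boot all_order all_algebra.
From mathcomp Require Import all_classical all_reals all_analysis.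
Set Implicit Arguments. Unset Strict Implicit. Unset Printing Implicit Defensive.
Import Order.TTheory GRing.Theory Num.Theory.
Import numFieldNormedType.Exports.
Local Open Scope classical_set_scope.
Local Open Scope ring_scope.

Definition cmod {R : realType} (z : R * R) : R := Num.sqrt (z.1 ^+ 2 + z.2 ^+ 2).

Definition csub {R : realType} (z w : R * R) : R * R := (z.1 - w.1, z.2 - w.2).

Definition caff {R : realType} (a b : R * R) (s : R) : R * R :=
  (a.1 + s * (b.1 - a.1), a.2 + s * (b.2 - a.2)).

Definition gamma0 {R : realType} (t : R) : R * R :=
  if t <= 5 / 4 then caff (-2, 1) (1, 1) (4 * (t - 1))
  else if t <= 3 / 2 then caff (1, 1) (1, -1) (4 * (t - 5 / 4))
  else if t <= 7 / 4 then caff (1, -1) (-1, -1) (4 * (t - 3 / 2))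
  else caff (-1, -1) (-1, 2) (4 * (t - 7 / 4)).

From HB Require Import structures.
From mathcomp Require Import all_boot all_order all_algebra.
From mathcomp Require Import all_classical all_reals all_analysis.
From mathcomp Require Import ring lra.
Import Order.TTheory GRing.Theory Num.Theory.
Import numFieldNormedType.Exports.
Local Open Scope classical_set_scope.
Local Open Scope ring_scope.

Set Implicit Arguments. Unset Strict Implicit. Unset Printing Implicit Defensive.

(* The first quarter of gamma0 runs from left to right along the line y = 1
   and its last quarter from bottom to top along x = -1; a path within 1/2 of
   gamma0 therefore crosses itself, gamma t1 = gamma t2 with t1 <= 5/4 and
   7/4 <= t2.  The loop gamma on [t1, t2] winds once around 0 and zero times
   around every point outside the square [-3, 3]^2.  Winding numbers are
   constant along polygonal paths avoiding the loop, and every point of the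
   component of 0 in the complement of the path is joined to 0 by such a
   polygonal path, so this component lies in the square.
   Winding numbers are computed combinatorially, as sums of increments of a
   piecewise-rational pseudo-argument along fine subdivisions; by compactness
   each small cell of a homotopy lands in an open half-plane, where these
   increments add up exactly, which gives homotopy invariance. *)

Section PseudoArgument.
Variable R : realFieldType.
Implicit Types (u v w p q n : R * R) (d : R).

Definition cross u v := u.1 * v.2 - u.2 * v.1.
Definition dotp u v := u.1 * v.1 + u.2 * v.2.

(* The argument of [u != 0] measured in quarter turns, up to an increasing
   reparametrisation of each quarter: its values lie in [[0, 4)]. *)
Definition diamond_arg u : R :=
  let r := u.1 / (`|u.1| + `|u.2|) in if 0 <= u.2 then 1 - r else 3 + r.

Definition wrap d : R := if 2 < d then d - 4 else if d <= -2 then d + 4 else d.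

Definition arg_step u v := wrap (diamond_arg v - diamond_arg u).

Lemma diamond_arg_cross_gt0 p q : 0 < cross p q ->
  let d := diamond_arg q - diamond_arg p in (0 < d < 2) \/ (-4 < d < -2).
Proof.
rewrite /cross /diamond_arg; case: p => x1 y1; case: q => x2 y2 /= hc.
have N_gt0 (x y : R) : (x != 0) || (y != 0) -> 0 < `|x| + `|y|.
  by move=> h; rewrite lt0r paddr_eq0 ?normr_ge0 // !normr_eq0 negb_and h addr_ge0.
have N1 : 0 < `|x1| + `|y1|.
  apply: N_gt0; apply: contraTT hc; rewrite negb_or !negbK => /andP[/eqP-> /eqP->].
  by rewrite !mul0r subrr ltxx.
have N2 : 0 < `|x2| + `|y2|.
  apply: N_gt0; apply: contraTT hc; rewrite negb_or !negbK => /andP[/eqP-> /eqP->].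
  by rewrite !mulr0 subrr ltxx.
(* Rescale [p] and [q] onto the unit diamond [|a| + |b| = 1]. *)
set a1 := x1 / _; set b1 := y1 / (`|x1| + `|y1|).
set a2 := x2 / _; set b2 := y2 / (`|x2| + `|y2|).
have d1 : `|a1| + `|b1| = 1.
  by rewrite /a1 /b1 !normrM !normfV (gtr0_norm N1) -mulrDl divff ?gt_eqF.
have d2 : `|a2| + `|b2| = 1.
  by rewrite /a2 /b2 !normrM !normfV (gtr0_norm N2) -mulrDl divff ?gt_eqF.
have hc' : 0 < a1 * b2 - b1 * a2.
  have e : x1 * y2 - y1 * x2 = (a1 * b2 - b1 * a2) * ((`|x1| + `|y1|) * (`|x2| + `|y2|)).
    by rewrite /a1 /b1 /a2 /b2; field; apply/andP; split; apply: lt0r_neq0.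
  by rewrite e pmulr_lgt0 ?mulr_gt0 in hc.
have -> : (0 <= y1) = (0 <= b1) by rewrite pmulr_lge0 ?invr_gt0.
have -> : (0 <= y2) = (0 <= b2) by rewrite pmulr_lge0 ?invr_gt0.
move: d1 d2 hc'; clear.
case: (lerP 0 a1) => ha1; case: (lerP 0 b1) => hb1;
case: (lerP 0 a2) => ha2; case: (lerP 0 b2) => hb2;
rewrite ?(ger0_norm ha1) ?(ltr0_norm ha1) ?(ger0_norm hb1) ?(ltr0_norm hb1)
        ?(ger0_norm ha2) ?(ltr0_norm ha2) ?(ger0_norm hb2) ?(ltr0_norm hb2) => d1 d2 hc;
by [left; apply/andP; split; nra | right; apply/andP; split; nra].
Qed.

Lemma wrapE d : [\/ wrap d = d - 4 /\ 2 < d, wrap d = d + 4 /\ d <= -2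
                  | wrap d = d /\ -2 < d <= 2].
Proof.
rewrite /wrap; case: ifP => h; first by constructor 1.
by case: ifP => h'; [constructor 2 | constructor 3; split => //; lra].
Qed.

(* [wrap d1 + wrap d2 - wrap (d1 + d2)] is a multiple of 4. *)
Lemma wrapD d1 d2 : -4 < wrap d1 + wrap d2 - wrap (d1 + d2) < 4 ->
  wrap d1 + wrap d2 = wrap (d1 + d2).
Proof.
by case: (wrapE d1) (wrapE d2) (wrapE (d1 + d2)) => -[-> ?] [] [-> ?] [] [-> ?]; lra.
Qed.

Lemma cross_gt0_arg_step p q : 0 < cross p q -> 0 < arg_step p q < 2.
Proof.
move/diamond_arg_cross_gt0; rewrite /arg_step.
by case: (wrapE (diamond_arg q - diamond_arg p)) => -[-> ?] []; lra.
Qed.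

Lemma cross_lt0_arg_step p q : cross p q < 0 -> -2 < arg_step p q < 0.
Proof.
move=> h; have /diamond_arg_cross_gt0 : 0 < cross q p by move: h; rewrite /cross; lra.
rewrite /arg_step.
by case: (wrapE (diamond_arg q - diamond_arg p)) => -[-> ?] []; lra.
Qed.

Lemma arg_stepxx u : arg_step u u = 0.
Proof. by rewrite /arg_step subrr; case: (wrapE 0) => -[-> ?]; lra. Qed.

Lemma diamond_argZ k u : 0 < k -> diamond_arg (k * u.1, k * u.2) = diamond_arg u.
Proof.
move=> k0; rewrite /diamond_arg /= pmulr_rge0 // !normrM (gtr0_norm k0) -mulrDr.
have [->|N0] := eqVneq (`|u.1| + `|u.2|) 0; first by rewrite mulr0 !invr0 !mulr0.
by rewrite invfM mulrACA divff ?gt_eqF // mul1r.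
Qed.

Lemma cross0_arg_step n p q : cross p q = 0 -> 0 < dotp n p -> 0 < dotp n q ->
  arg_step p q = 0.
Proof.
move=> hc hp hq.
have e1 : dotp n p * q.1 = dotp n q * p.1.
  apply/eqP; rewrite -subr_eq0; apply/eqP.
  by transitivity (- n.2 * cross p q); [rewrite /dotp /cross; ring | rewrite hc mulr0].
have e2 : dotp n p * q.2 = dotp n q * p.2.
  apply/eqP; rewrite -subr_eq0; apply/eqP.
  by transitivity (n.1 * cross p q); [rewrite /dotp /cross; ring | rewrite hc mulr0].
set l := dotp n q / dotp n p.
have q1 : q.1 = l * p.1 by rewrite /l mulrAC -e1 mulrAC divff ?gt_eqF // mul1r.
have q2 : q.2 = l * p.2 by rewrite /l mulrAC -e2 mulrAC divff ?gt_eqF // mul1r.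
rewrite /arg_step [q]surjective_pairing q1 q2 diamond_argZ ?divr_gt0 // subrr.
by case: (wrapE 0) => -[-> ?]; lra.
Qed.

Lemma cross_dotp_exchange n u v w :
  cross u v * dotp n w + cross v w * dotp n u = cross u w * dotp n v.
Proof. by rewrite /cross /dotp; ring. Qed.

Lemma arg_step_sign n p q : 0 < dotp n p -> 0 < dotp n q ->
  [/\ -2 < arg_step p q < 2, 0 < arg_step p q -> 0 < cross p q
    & arg_step p q < 0 -> cross p q < 0].
Proof.
move=> hp hq; case: (ltrgtP (cross p q) 0) => [/cross_lt0_arg_step|/cross_gt0_arg_step|c0].
- by move=> ?; split=> *; lra.
- by move=> ?; split=> *; lra.
- by rewrite (cross0_arg_step c0 hp hq); split=> *; lra.
Qed.

(* Inside a half-plane the steps add up without wrap-around: by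
   [cross_dotp_exchange], two steps of one sign cannot compose to a step of
   the other sign. *)
Lemma arg_stepD n u v w : 0 < dotp n u -> 0 < dotp n v -> 0 < dotp n w ->
  arg_step u v + arg_step v w = arg_step u w.
Proof.
move=> hu hv hw.
have [b1 p1 n1] := arg_step_sign hu hv.
have [b2 p2 n2] := arg_step_sign hv hw.
have [b3 p3 n3] := arg_step_sign hu hw.
have X := cross_dotp_exchange n u v w.
suff : -4 < arg_step u v + arg_step v w - arg_step u w < 4.
  rewrite /arg_step; have -> : diamond_arg w - diamond_arg u =
    (diamond_arg v - diamond_arg u) + (diamond_arg w - diamond_arg v) by ring.
  exact: wrapD.
apply/andP; split.
- case: (ltP (arg_step u v) 0) => h1; last by lra.
  case: (ltP (arg_step v w) 0) => h2; last by lra.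
  case: (ltP 0 (arg_step u w)) => h3; last by lra.
  have A : cross u v * dotp n w < 0 by rewrite pmulr_llt0 // n1.
  have B : cross v w * dotp n u < 0 by rewrite pmulr_llt0 // n2.
  have C : 0 < cross u w * dotp n v by rewrite pmulr_lgt0 // p3.
  lra.
- case: (ltP 0 (arg_step u v)) => h1; last by lra.
  case: (ltP 0 (arg_step v w)) => h2; last by lra.
  case: (ltP (arg_step u w) 0) => h3; last by lra.
  have A : 0 < cross u v * dotp n w by rewrite pmulr_lgt0 // p1.
  have B : 0 < cross v w * dotp n u by rewrite pmulr_lgt0 // p2.
  have C : cross u w * dotp n v < 0 by rewrite pmulr_llt0 // n3.
  lra.
Qed.

Lemma dotp_gt0_near u z : 0 < `|u.1| + `|u.2| ->
  `|z.1 - u.1| < (`|u.1| + `|u.2|) / 4 -> `|z.2 - u.2| < (`|u.1| + `|u.2|) / 4 ->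
  0 < dotp u z.
Proof.
case: u z => u1 u2 [z1 z2]; rewrite /dotp /=.
set A := `|u1|; set B := `|u2|; set e := (A + B) / 4 => N l1 l2.
have sq1 : u1 * u1 = A * A by rewrite /A -normrM -expr2 ger0_norm // sqr_ge0.
have sq2 : u2 * u2 = B * B by rewrite /B -normrM -expr2 ger0_norm // sqr_ge0.
have t1 : - (A * e) <= u1 * (z1 - u1).
  by apply: lerNnormlW; rewrite normrM; apply: ler_wpM2l => //; exact: ltW.
have t2 : - (B * e) <= u2 * (z2 - u2).
  by apply: lerNnormlW; rewrite normrM; apply: ler_wpM2l => //; exact: ltW.
have k : 0 < A * A + B * B - A * e - B * e.
  have : 0 <= (A - B) * (A - B) by rewrite -expr2 sqr_ge0.
  have : 0 < (A + B) * (A + B) by apply: mulr_gt0.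
  by rewrite /e; nra.
have -> : u1 * z1 + u2 * z2 = u1 * u1 + u1 * (z1 - u1) + (u2 * u2 + u2 * (z2 - u2)) by ring.
by rewrite sq1 sq2; lra.
Qed.
End PseudoArgument.

Section ArgumentVariation.
Variable R : realFieldType.

Fixpoint argvar (T : Type) (f : T -> R * R) (x : T) (L : seq T) : R :=
  if L is y :: L' then arg_step (f x) (f y) + argvar f y L' else 0.

Lemma argvar_cat T (f : T -> R * R) x L1 L2 :
  argvar f x (L1 ++ L2) = argvar f x L1 + argvar f (last x L1) L2.
Proof. by elim: L1 x => [|y L IH] x /=; rewrite ?add0r // IH addrA. Qed.

Lemma argvar_halfplane (T : eqType) n (f : T -> R * R) x L :
  all (fun t => 0 < dotp n (f t)) (x :: L) -> argvar f x L = arg_step (f x) (f (last x L)).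
Proof.
elim: L x => [|y L IH] x; first by rewrite /= arg_stepxx.
move=> hL; have /and3P[hx hy _] := hL.
rewrite /= IH; last by case/andP: hL.
apply: arg_stepD hx hy _.
by move/allP: hL; apply; rewrite inE mem_last orbT.
Qed.

Definition mesh_lt (d : R) : R -> seq R -> bool := path (fun s t => `|s - t| < d).

Definition in_range (a b : R) : pred R := fun t => a <= t <= b.

Definition subdivision (d a b : R) (L : seq R) :=
  [&& mesh_lt d a L, all (in_range a b) (a :: L) & last a L == b].

Lemma subdivision_last (d a b : R) L : subdivision d a b L -> last a L = b.
Proof. by case/and3P=> _ _ /eqP. Qed.

Lemma subdivisionW (d d' a b : R) L : d <= d' -> subdivision d a b L -> subdivision d' a b L.
Proof.
move=> dd' /and3P[fL iL lL]; apply/and3P; split => //.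
by apply: sub_path fL => s t /lt_le_trans; apply.
Qed.

Lemma subdivision_cat (d a b c : R) L1 L2 : subdivision d a b L1 -> subdivision d b c L2 ->
  subdivision d a c (L1 ++ L2).
Proof.
case/and3P=> f1 i1 /eqP l1 /and3P[f2 i2 /eqP l2].
have /andP[/andP[_ ab] j1] := i1; have /andP[/andP[_ bc] j2] := i2.
apply/and3P; split.
- by move: f1 f2; rewrite /mesh_lt cat_path l1 => -> ->.
- rewrite /= all_cat {1}/in_range lexx (le_trans ab bc) /=; apply/andP; split.
  + by apply: (sub_all _ j1) => t /andP[? ?]; apply/andP; split => //; apply: le_trans bc.
  + by apply: (sub_all _ j2) => t /andP[? ?]; apply/andP; split => //; apply: le_trans ab _.
- by rewrite last_cat l1 l2.
Qed.

Lemma argvar_subdivision_halfplane n (f : R -> R * R) d a b L : subdivision d a b L ->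
  (forall t, a <= t <= b -> 0 < dotp n (f t)) -> argvar f a L = arg_step (f a) (f b).
Proof.
case/and3P=> _ iL /eqP lL hf; rewrite -lL; apply: (argvar_halfplane (n := n)).
by apply: (sub_all _ iL) => t; apply: hf.
Qed.

Definition halfplane_cells (H : R -> R -> R * R) (a b c d dl : R) :=
  forall s s' t t', a <= s <= b -> a <= s' <= b -> c <= t <= d -> c <= t' <= d ->
  `|s - s'| < dl -> `|t - t'| < dl ->
  exists n, [/\ 0 < dotp n (H s t), 0 < dotp n (H s' t), 0 < dotp n (H s t')
              & 0 < dotp n (H s' t')].

Section Grid.
Variables (H : R -> R -> R * R) (a b c d dl : R).
Hypothesis cells : halfplane_cells H a b c d dl.

Lemma argvar_strip s s' t T : a <= s <= b -> a <= s' <= b -> `|s - s'| < dl ->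
  mesh_lt dl t T -> all (in_range c d) (t :: T) ->
  arg_step (H s t) (H s' t) + argvar (H s') t T =
  argvar (H s) t T + arg_step (H s (last t T)) (H s' (last t T)).
Proof.
move=> hs hs' ss'; elim: T t => [|t' T IH] t /=; first by rewrite addr0 add0r.
case/andP=> tt' fT /and3P[ht ht' hT].
rewrite -addrA -IH /= ?ht' // !addrA.
have [n [A B C D]] := cells hs hs' ht ht' ss' tt'.
by rewrite (arg_stepD A B D) (arg_stepD A C D).
Qed.

Lemma argvar_grid s S t T : mesh_lt dl s S -> all (in_range a b) (s :: S) ->
  mesh_lt dl t T -> all (in_range c d) (t :: T) ->
  argvar (H^~ t) s S + argvar (H (last s S)) t T =
  argvar (H s) t T + argvar (H^~ (last t T)) s S.
Proof.
move=> + + fT iT; elim: S s => [|s' S IH] s /=; first by rewrite addr0 add0r.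
case/andP=> ss' fS /and3P[hs hs' hS].
by rewrite -addrA IH /= ?hs' // addrA (argvar_strip hs hs' ss' fT iT) addrA.
Qed.
End Grid.
End ArgumentVariation.

Section Crossing.
Variable R : realType.

Lemma within_subitv_continuous (f : R -> R * R) a b a' b' : a <= a' -> b' <= b ->
  {within `[a, b], continuous f} -> {within `[a', b'], continuous f}.
Proof.
by move=> ha hb; apply: continuous_subspaceW => x /=; rewrite !in_itv /=; lra.
Qed.

Lemma within_itv_continuous_dist (f : R -> R * R) a b x e :
  {within `[a, b], continuous f} -> a <= x <= b -> 0 < e ->
  exists2 r, 0 < r & forall y, a <= y <= b -> `|x - y| < r ->
    `|(f x).1 - (f y).1| < e /\ `|(f x).2 - (f y).2| < e.
Proof.
move=> /subspace_continuousP cf hx e0.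
have /cvgrPdist_lt/(_ e e0) := cf x (ltac:(by rewrite /= in_itv)).
rewrite near_withinE => /nbhs_ballP[r /= r0 Hr].
exists r => // y hy xy.
have /(_ (ltac:(by rewrite in_itv))) := Hr y xy.
by rewrite prod_normE /= gt_max => /andP[].
Qed.

Lemma halfplane_near (f g : R -> R * R) a b c d s0 t0 :
  {within `[a, b], continuous f} -> {within `[c, d], continuous g} ->
  a <= s0 <= b -> c <= t0 <= d -> f s0 != g t0 ->
  exists2 r, 0 < r & forall s t, a <= s <= b -> c <= t <= d ->
    `|s0 - s| < r -> `|t0 - t| < r -> 0 < dotp (csub (f s0) (g t0)) (csub (f s) (g t)).
Proof.
move=> cf cg hs0 ht0 neq.
set u := csub (f s0) (g t0).
have [u1 u2] : u.1 = (f s0).1 - (g t0).1 /\ u.2 = (f s0).2 - (g t0).2 by [].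
clearbody u.
have N : 0 < `|u.1| + `|u.2|.
  move: neq; rewrite [f s0]surjective_pairing [g t0]surjective_pairing xpair_eqE negb_and.
  case/orP=> h; [apply: ltr_pwDl | apply: ltr_pwDr];
    by rewrite ?normr_ge0 // normr_gt0 ?u1 ?u2 subr_eq0.
have e0 : 0 < (`|u.1| + `|u.2|) / 8 by apply: divr_gt0.
have [r1 r10 Hr1] := within_itv_continuous_dist cf hs0 e0.
have [r2 r20 Hr2] := within_itv_continuous_dist cg ht0 e0.
exists (Num.min r1 r2) => [|s t hs ht]; first by rewrite lt_min r10 r20.
rewrite !lt_min => /andP[d1 _] /andP[_ d2].
have [/ltr_normlP[? ?] /ltr_normlP[? ?]] := Hr1 s hs d1.
have [/ltr_normlP[? ?] /ltr_normlP[? ?]] := Hr2 t ht d2.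
by apply: dotp_gt0_near => //; apply/ltr_normlP; rewrite /csub /=; split; lra.
Qed.

Lemma halfplane_cells_exists (f g : R -> R * R) a b c d :
  {within `[a, b], continuous f} -> {within `[c, d], continuous g} ->
  (forall s t, a <= s <= b -> c <= t <= d -> f s != g t) ->
  exists2 dl, 0 < dl & halfplane_cells (fun s t => csub (f s) (g t)) a b c d dl.
Proof.
move=> cf cg neq.
have /compact_near_coveringP cover : compact (`[a, b] `*` `[c, d]).
  exact: compact_setX (@segment_compact R a b) (@segment_compact R c d).
pose P (i : R) (z : R * R) := forall s s' t t',
  a <= s <= b -> a <= s' <= b -> c <= t <= d -> c <= t' <= d ->
  `|z.1 - s| < i -> `|z.1 - s'| < i -> `|z.2 - t| < i -> `|z.2 - t'| < i ->
  exists n, [/\ 0 < dotp n (csub (f s) (g t)), 0 < dotp n (csub (f s') (g t)),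
    0 < dotp n (csub (f s) (g t')) & 0 < dotp n (csub (f s') (g t'))].
have local x : (`[a, b] `*` `[c, d]) x -> \forall x' \near x & i \near (0 : R)^'+, P i x'.
  case: x => s0 t0 [/=]; rewrite !in_itv /= => hs0 ht0.
  have [r r0 Hr] := halfplane_near cf cg hs0 ht0 (neq _ _ hs0 ht0).
  have r2 : 0 < r / 2 by apply: divr_gt0.
  exists ([set z | `|s0 - z.1| < r / 2 /\ `|t0 - z.2| < r / 2], [set i | i < r / 2]).
    split; last exact: nbhs_right_lt.
    by apply/nbhs_ballP; exists (r / 2).
  have tri (p q w : R) : `|p - q| < r / 2 -> `|q - w| < r / 2 -> `|p - w| < r.
    by move=> /ltr_normlP[? ?] /ltr_normlP[? ?]; apply/ltr_normlP; split; lra.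
  move=> [z i] [/= [hz1 hz2] hi] s s' t t' hs hs' ht ht' d1 d2 d3 d4.
  have e1 := tri _ _ _ hz1 (lt_trans d1 hi); have e2 := tri _ _ _ hz1 (lt_trans d2 hi).
  have e3 := tri _ _ _ hz2 (lt_trans d3 hi); have e4 := tri _ _ _ hz2 (lt_trans d4 hi).
  by exists (csub (f s0) (g t0)); split; apply: Hr.
have [i [/= i0 Hi]] := filter_ex (filterI (nbhs_right_gt (0 : R)) (cover _ _ P _ local)).
exists i => // s s' t t' hs hs' ht ht' ds dt.
by apply: (Hi (s, t)); rewrite /= ?subrr ?normr0.
Qed.

Lemma subdivision_exists (d a b : R) : a <= b -> 0 < d -> exists L, subdivision d a b L.
Proof.
move=> ab d0; have d2 : 0 < d / 2 by apply: divr_gt0.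
have [N HN] : exists N : nat, b - a <= N%:R * (d / 2).
  exists (Num.bound ((b - a) / (d / 2))).
  have h0 : 0 <= (b - a) / (d / 2) by apply: divr_ge0; lra.
  by rewrite -ler_pdivrMr // ltW // archi_boundP.
elim: N a ab HN => [|N IH] a ab HN.
  by exists [::]; rewrite /subdivision /= /in_range lexx ab eq_le ab /=; lra.
have [close|] := ltP (b - a) d.
  exists [:: b]; rewrite /subdivision /= /in_range lexx ab eqxx !andbT distrC.
  by rewrite ger0_norm ?subr_ge0 // close lexx.
move=> far; rewrite -natr1 mulrDl mul1r in HN.
have [|L] := IH (a + d / 2) ltac:(lra); first lra.
case/and3P=> fL iL lL; exists (a + d / 2 :: L); apply/and3P; split => //=.
- by rewrite fL andbT opprD addrA subrr add0r normrN gtr0_norm //; lra.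
- rewrite {1}/in_range lexx ab /=.
  by apply: sub_all iL => t /andP[? ?]; apply/andP; split; lra.
Qed.

Lemma paths_cross (f g : R -> R * R) a b c d : a <= b -> c <= d ->
  {within `[a, b], continuous f} -> {within `[c, d], continuous g} ->
  (forall t, c <= t <= d -> (f a).1 < (g t).1 < (f b).1) ->
  (forall s, a <= s <= b -> (g c).2 < (f s).2 < (g d).2) ->
  exists s t, [/\ a <= s <= b, c <= t <= d & f s = g t].
Proof.
move=> ab cd cf cg hx hy; apply: contrapT => nomeet.
have neq s t : a <= s <= b -> c <= t <= d -> f s != g t.
  by move=> hs ht; apply/eqP => e; apply: nomeet; exists s, t.
have [dl dl0 cells] := halfplane_cells_exists cf cg neq.
have [S sS] := subdivision_exists ab dl0; have [T sT] := subdivision_exists cd dl0.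
have := argvar_grid cells; case/and3P: (sS) => fS iS /eqP lS.
case/and3P: (sT) => fT iT /eqP lT; move=> /(_ a S c T fS iS fT iT); rewrite lS lT /=.
rewrite (argvar_subdivision_halfplane (n := (0, 1)) sS); last first.
  by move=> s /hy; rewrite /dotp /csub /=; lra.
rewrite (argvar_subdivision_halfplane (n := (1, 0)) sT); last first.
  by move=> t /hx; rewrite /dotp /csub /=; lra.
rewrite (argvar_subdivision_halfplane (n := (-1, 0)) sT); last first.
  by move=> t /hx; rewrite /dotp /csub /=; lra.
rewrite (argvar_subdivision_halfplane (n := (0, -1)) sS); last first.
  by move=> s /hy; rewrite /dotp /csub /=; lra.
have /andP[? ?] := hx c (ltac:(by rewrite lexx cd)).
have /andP[? ?] := hx d (ltac:(by rewrite lexx cd)).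
have /andP[? ?] := hy a (ltac:(by rewrite lexx ab)).
have /andP[? ?] := hy b (ltac:(by rewrite lexx ab)).
have /cross_lt0_arg_step/andP[_ ?] : cross (csub (f a) (g c)) (csub (f b) (g c)) < 0.
  by rewrite /cross /csub /=; nra.
have /cross_lt0_arg_step/andP[_ ?] : cross (csub (f b) (g c)) (csub (f b) (g d)) < 0.
  by rewrite /cross /csub /=; nra.
have /cross_gt0_arg_step/andP[? _] : 0 < cross (csub (f a) (g c)) (csub (f a) (g d)).
  by rewrite /cross /csub /=; nra.
have /cross_gt0_arg_step/andP[? _] : 0 < cross (csub (f a) (g d)) (csub (f b) (g d)).
  by rewrite /cross /csub /=; nra.
lra.
Qed.
End Crossing.

Section Winding.
Variable R : realType.

Lemma caff_continuous (x y : R * R) : continuous (caff x y).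
Proof.
move=> s; apply: (@cvg_pair _ _ _ _ (nbhs (caff x y s).1) (nbhs (caff x y s).2)) => /=;
  by apply: cvgD; [exact: cvg_cst | apply: cvgM; [exact: cvg_id | exact: cvg_cst]].
Qed.

Lemma caff0 (x y : R * R) : caff x y 0 = x.
Proof. by rewrite /caff !mul0r !addr0 -surjective_pairing. Qed.

Lemma caff1 (x y : R * R) : caff x y 1 = y.
Proof. by rewrite /caff !mul1r !subrKC -surjective_pairing. Qed.

Definition segment_in (U : set (R * R)) (x y : R * R) :=
  forall s, 0 <= s <= 1 -> U (caff x y s).

Fixpoint polygonal_in (U : set (R * R)) (x : R * R) (L : seq (R * R)) : Prop :=
  if L is y :: L' then segment_in U x y /\ polygonal_in U y L' else True.

(* In quarter turns; it is the winding number of the loop [g] around [z]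
   only for fine enough subdivisions [T] of its parameter interval. *)
Definition winding (g : R -> R * R) (c : R) (T : seq R) (z : R * R) :=
  argvar (fun t => csub z (g t)) c T.

Section Loop.
Variables (g : R -> R * R) (c d : R) (U : set (R * R)).
Hypotheses (cg : {within `[c, d], continuous g}) (closed_g : g c = g d)
  (U_avoids_g : forall t, c <= t <= d -> ~ U (g t)).

Lemma winding_segment x y : segment_in U x y ->
  exists2 dl, 0 < dl & forall T, subdivision dl c d T -> winding g c T x = winding g c T y.
Proof.
move=> Uxy.
have neq s t : 0 <= s <= 1 -> c <= t <= d -> caff x y s != g t.
  by move=> hs ht; apply/eqP => e; apply: (U_avoids_g ht); rewrite -e; apply: Uxy.
have [dl dl0 cells] :=
  halfplane_cells_exists (continuous_subspaceT (@caff_continuous x y)) cg neq.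
exists dl => // T /and3P[fT iT /eqP lT].
have [S /and3P[fS iS /eqP lS]] := subdivision_exists ler01 dl0.
have := argvar_grid cells fS iS fT iT.
by rewrite /winding lS lT /= -closed_g caff0 caff1 [X in X = _]addrC => /addIr ->.
Qed.

Lemma winding_polygonal z L : polygonal_in U z L ->
  exists2 dl, 0 < dl & forall T, subdivision dl c d T ->
    winding g c T z = winding g c T (last z L).
Proof.
elim: L z => [|y L IH] z /=; first by exists 1.
case=> /winding_segment[d1 d10 H1] /IH[d2 d20 H2].
exists (Num.min d1 d2) => [|T sT]; first by rewrite lt_min d10 d20.
by rewrite H1 ?H2 //; apply: subdivisionW sT; rewrite ge_min lexx ?orbT.
Qed.
End Loop.

Lemma winding_halfplane (g : R -> R * R) c d dl T z n : g c = g d ->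
  subdivision dl c d T -> (forall t, c <= t <= d -> 0 < dotp n (csub z (g t))) ->
  winding g c T z = 0.
Proof.
by move=> e sT hn; rewrite /winding (argvar_subdivision_halfplane sT hn) e arg_stepxx.
Qed.

Lemma halfplane_off_box (g : R -> R * R) c d r z :
  (forall t, c <= t <= d -> `|(g t).1| < r /\ `|(g t).2| < r) ->
  r <= `|z.1| \/ r <= `|z.2| -> exists n, forall t, c <= t <= d -> 0 < dotp n (csub z (g t)).
Proof.
move=> hg; case; rewrite ler_normr => /orP[] h;
  [exists (1, 0) | exists (-1, 0) | exists (0, 1) | exists (0, -1)];
  by move=> t /hg; rewrite !ltr_norml /dotp /csub /=; lra.
Qed.

Lemma open_box (U : set (R * R)) z : open U -> U z ->
  exists2 r, 0 < r & forall w, `|z.1 - w.1| < r -> `|z.2 - w.2| < r -> U w.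
Proof.
rewrite openE => oU Uz; have /nbhs_ballP[r r0 Hr] := oU z Uz.
by exists r => // w h1 h2; apply: Hr; split.
Qed.

Lemma caff_box (z w : R * R) r s : `|z.1 - w.1| < r -> `|z.2 - w.2| < r -> 0 <= s <= 1 ->
  [/\ `|z.1 - (caff w z s).1| < r, `|z.2 - (caff w z s).2| < r,
      `|z.1 - (caff z w s).1| < r & `|z.2 - (caff z w s).2| < r].
Proof.
move=> /ltr_normlP[? ?] /ltr_normlP[? ?] /andP[? ?]; rewrite /caff /=.
by split; apply/ltr_normlP; split; nra.
Qed.

(* The points of [U] joined to [z0] by a polygonal path in [U] form an open
   subset of [U] with open complement in [U]. *)
Lemma connected_component_polygonal (U : set (R * R)) z0 : open U -> U z0 ->
  connected_component U z0 `<=` [set z | exists2 L, polygonal_in U z L & last z L = z0].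
Proof.
move=> oU Uz0; set V := [set z | _]; have s01 : 0 <= (0 : R) <= 1 by rewrite lexx ler01.
have VU : V `<=` U.
  move=> z [[|y L] /= pL lz]; first by rewrite lz.
  by have := pL.1 0 s01; rewrite caff0.
have box z : U z -> exists2 r, 0 < r & forall w, `|z.1 - w.1| < r -> `|z.2 - w.2| < r ->
    segment_in U w z /\ segment_in U z w.
  move=> /(open_box oU)[r r0 hr]; exists r => // w h1 h2.
  by split=> s hs; apply: hr; have [] := caff_box h1 h2 hs.
have oV : open V.
  rewrite openE => z Vz; have [r r0 hr] := box z (VU z Vz).
  apply/nbhs_ballP; exists r => // w [/= h1 h2]; case: Vz => L pL lz.
  by exists (z :: L) => //; split => //; exact: (hr w h1 h2).1.
have oUV : open (U `\` V).
  rewrite openE => z [Uz nVz]; have [r r0 hr] := box z Uz.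
  apply/nbhs_ballP; exists r => // w [/= h1 h2]; have [Uwz Uzw] := hr w h1 h2.
  split; first by have := Uwz 0 s01; rewrite caff0.
  by case=> L pL lw; apply: nVz; exists (w :: L).
move=> z [C [C0 CU cC] Cz].
have : C `&` V = C.
  apply: cC; first by exists z0; split => //; exists [::].
    by exists V.
  exists (~` (U `\` V)); first exact: open_closedC.
  apply/seteqP; split => x [Cx hx]; split => //; first by move=> [].
  by apply: contrapT => nV; apply: hx; split => //; exact: CU.
by move=> e; rewrite -e in Cz; case: Cz.
Qed.
End Winding.

Section NearGamma0.
Variable R : realType.
Implicit Types gamma : R -> R * R.

Definition near_gamma0 gamma := forall t, 1 <= t <= 2 ->
  `|(gamma t).1 - (gamma0 t).1| < 1 / 2 /\ `|(gamma t).2 - (gamma0 t).2| < 1 / 2.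

Lemma cmod_ge_norm (v : R * R) : `|v.1| <= cmod v /\ `|v.2| <= cmod v.
Proof.
rewrite /cmod -!sqrtr_sqr !ler_sqrt ?addr_ge0 ?sqr_ge0 //.
by rewrite lerDl lerDr !sqr_ge0.
Qed.

Lemma cmod_le_norm1 (v : R * R) : cmod v <= `|v.1| + `|v.2|.
Proof.
have h : 0 <= `|v.1| + `|v.2| by apply: addr_ge0.
rewrite /cmod -(ger0_norm h) -sqrtr_sqr ler_sqrt ?sqr_ge0 //.
rewrite -(real_normK (num_real v.1)) -(real_normK (num_real v.2)) sqrrD.
by have := mulr_ge0 (normr_ge0 v.1) (normr_ge0 v.2); lra.
Qed.

Lemma gamma0_bounded (t : R) : 1 <= t <= 2 -> `|(gamma0 t).1| <= 2 /\ `|(gamma0 t).2| <= 2.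
Proof.
move=> ?; rewrite !ler_norml /gamma0 /caff; case: (lerP t (5/4)) => ?;
  [|case: (lerP t (3/2)) => ?; [|case: (lerP t (7/4)) => ?]]; by split => /=; lra.
Qed.

Lemma near_gamma0_sup gamma : {within `[1, 2], continuous gamma} ->
  sup [set cmod (csub (gamma t) (gamma0 t)) | t in `[1, 2]] < 1 / 2 -> near_gamma0 gamma.
Proof.
move=> cg hsup t ht.
have [M [_ HM]] := compact_bounded (continuous_compact cg (@segment_compact R 1 2)).
(* [sup] of a set that is not bounded above is [0], so we need [gamma] bounded. *)
have supS : has_sup [set cmod (csub (gamma t) (gamma0 t)) | t in `[1, 2]].
  split; first by exists (cmod (csub (gamma 1) (gamma0 1))), 1; rewrite //= in_itv /= lexx ler1n.
  exists (2 * (M + 1) + 4) => _ [s hs <-].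
  have hs' : 1 <= s <= 2 by move: hs; rewrite /= in_itv.
  have := HM (M + 1) (ltr_pwDr ltr01 (lexx M)) _ (ex_intro2 _ _ s hs erefl).
  rewrite /= prod_normE ge_max => /andP[m1 m2]; have [b1 b2] := gamma0_bounded hs'.
  apply: le_trans (cmod_le_norm1 _) _; rewrite /csub /=.
  have := ler_normB (gamma s).1 (gamma0 s).1; have := ler_normB (gamma s).2 (gamma0 s).2.
  lra.
have : cmod (csub (gamma t) (gamma0 t)) < 1 / 2.
  by apply: le_lt_trans hsup; apply: sup_upper_bound => //; exists t; rewrite //= in_itv.
by have [] := cmod_ge_norm (csub (gamma t) (gamma0 t)); rewrite /csub /=; split; lra.
Qed.

(* On the four quarters of [[1, 2]], [gamma0 t] is [(12 t - 14, 1)],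
   [(1, 11 - 8 t)], [(13 - 8 t, -1)] and [(-1, 12 t - 22)]. *)
Lemma near_gamma0_pieces gamma : near_gamma0 gamma ->
  [/\ forall t, 1 <= t <= 5/4 ->
        12 * t - 29/2 < (gamma t).1 < 12 * t - 27/2 /\ 1/2 < (gamma t).2 < 3/2,
      forall t, 5/4 <= t <= 3/2 ->
        1/2 < (gamma t).1 < 3/2 /\ 21/2 - 8 * t < (gamma t).2 < 23/2 - 8 * t,
      forall t, 3/2 <= t <= 7/4 ->
        25/2 - 8 * t < (gamma t).1 < 27/2 - 8 * t /\ -3/2 < (gamma t).2 < -1/2
    & forall t, 7/4 <= t <= 2 ->
        -3/2 < (gamma t).1 < -1/2 /\ 12 * t - 45/2 < (gamma t).2 < 12 * t - 43/2].
Proof.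
move=> near; split=> t ht; have /near : 1 <= t <= 2 by lra.
all: rewrite /gamma0 /caff; case: (lerP t (5/4)) => ?;
  [|case: (lerP t (3/2)) => ?; [|case: (lerP t (7/4)) => ?]];
  move=> /= [/ltr_normlP[? ?] /ltr_normlP[? ?]]; split; lra.
Qed.

Lemma near_gamma0_box gamma t : near_gamma0 gamma -> 1 <= t <= 2 ->
  `|(gamma t).1| < 5/2 /\ `|(gamma t).2| < 5/2.
Proof.
move=> /near_gamma0_pieces[p1 p2 p3 p4] ht; rewrite !ltr_norml.
have /or4P[/[dup] ? /p1|/[dup] ? /p2|/[dup] ? /p3|/[dup] ? /p4] :
  [|| 1 <= t <= 5/4, 5/4 <= t <= 3/2, 3/2 <= t <= 7/4 | 7/4 <= t <= 2] by lra.
all: by move=> [? ?]; split; lra.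
Qed.

Lemma near_gamma0_origin gamma : near_gamma0 gamma -> ~ (gamma @` `[1, 2]) (0, 0).
Proof.
move=> /near_gamma0_pieces[p1 p2 p3 p4] [t]; rewrite /= in_itv /= => ht e.
have /or4P[/p1|/p2|/p3|/p4] :
  [|| 1 <= t <= 5/4, 5/4 <= t <= 3/2, 3/2 <= t <= 7/4 | 7/4 <= t <= 2] by lra.
all: by rewrite e /= => -[? ?]; lra.
Qed.

Lemma near_gamma0_self_intersection gamma : {within `[1, 2], continuous gamma} ->
  near_gamma0 gamma -> exists t1 t2, [/\ 1 <= t1 <= 5/4, 7/4 <= t2 <= 2 & gamma t1 = gamma t2].
Proof.
move=> cg /near_gamma0_pieces[p1 p2 p3 p4].
apply: paths_cross; [lra | lra | apply: within_subitv_continuous cg; lra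
                                | apply: within_subitv_continuous cg; lra | |].
- move=> t ht; have [? _] := p4 t ht.
  by have [? _] := p1 1 ltac:(lra); have [? _] := p1 (5/4) ltac:(lra); lra.
- move=> s hs; have [_ ?] := p1 s hs.
  by have [_ ?] := p4 (7/4) ltac:(lra); have [_ ?] := p4 2 ltac:(lra); lra.
Qed.

(* The four quarters of the loop lie in the half-planes [y > 0], [x > 0],
   [y < 0] and [x < 0] respectively, and turn clockwise around the origin. *)
Lemma near_gamma0_winding_origin gamma t1 t2 dl : near_gamma0 gamma ->
  1 <= t1 <= 5/4 -> 7/4 <= t2 <= 2 -> gamma t1 = gamma t2 -> 0 < dl ->
  exists2 T, subdivision dl t1 t2 T & winding gamma t1 T (0, 0) < 0.
Proof.
move=> /near_gamma0_pieces[p1 p2 p3 p4] ht1 ht2 e dl0.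
have [T1 s1] := subdivision_exists (ltac:(lra) : t1 <= 5/4) dl0.
have [T2 s2] := subdivision_exists (ltac:(lra) : 5/4 <= 3/2) dl0.
have [T3 s3] := subdivision_exists (ltac:(lra) : 3/2 <= 7/4) dl0.
have [T4 s4] := subdivision_exists (ltac:(lra) : 7/4 <= t2) dl0.
exists (T1 ++ T2 ++ T3 ++ T4).
  exact: subdivision_cat s1 (subdivision_cat s2 (subdivision_cat s3 s4)).
rewrite /winding argvar_cat (subdivision_last s1) argvar_cat (subdivision_last s2).
rewrite argvar_cat (subdivision_last s3).
rewrite (argvar_subdivision_halfplane (n := (0, -1)) s1); last first.
  by move=> t ht; have [_ ?] := p1 t ltac:(lra); rewrite /dotp /csub /=; lra.
rewrite (argvar_subdivision_halfplane (n := (-1, 0)) s2); last first.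
  by move=> t ht; have [? _] := p2 t ltac:(lra); rewrite /dotp /csub /=; lra.
rewrite (argvar_subdivision_halfplane (n := (0, 1)) s3); last first.
  by move=> t ht; have [_ ?] := p3 t ltac:(lra); rewrite /dotp /csub /=; lra.
rewrite (argvar_subdivision_halfplane (n := (1, 0)) s4); last first.
  by move=> t ht; have [? _] := p4 t ltac:(lra); rewrite /dotp /csub /=; lra.
have [_ /andP[? ?]] := p1 t1 ht1; have := p4 t2 ht2; rewrite -e => -[/andP[? ?] _].
have [/andP[? ?] /andP[? ?]] := p1 (5/4) ltac:(lra).
have [/andP[? ?] /andP[? ?]] := p2 (3/2) ltac:(lra).
have [/andP[? ?] _] := p4 (7/4) ltac:(lra); have [_ /andP[? ?]] := p3 (7/4) ltac:(lra).
have step a b : cross (csub (0, 0) (gamma a)) (csub (0, 0) (gamma b)) < 0 ->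
    arg_step (csub (0, 0) (gamma a)) (csub (0, 0) (gamma b)) < 0.
  by move/cross_lt0_arg_step/andP=> [].
have := step t1 (5/4) ltac:(rewrite /cross /csub /=; nra).
have := step (5/4) (3/2) ltac:(rewrite /cross /csub /=; nra).
have := step (3/2) (7/4) ltac:(rewrite /cross /csub /=; nra).
have := step (7/4) t1 ltac:(rewrite /cross /csub /=; nra).
lra.
Qed.
End NearGamma0.

Theorem lemma7p2 (R : realType) (gamma : R -> R * R) :
  {within `[1, 2], continuous gamma} ->
  sup [set cmod (csub (gamma t) (gamma0 t)) | t in `[1, 2]] < 1 / 2 ->
  (~` (gamma @` `[1, 2])) (0, 0) /\
  bounded_set (connected_component (~` (gamma @` `[1, 2])) (0, 0)).
Proof.
move=> cg hsup; have near := near_gamma0_sup cg hsup.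
have U0 := near_gamma0_origin near; split => //.
have [t1 [t2 [ht1 ht2 e]]] := near_gamma0_self_intersection cg near.
have oU : open (~` (gamma @` `[1, 2])).
  apply: closed_openC; apply: compact_closed; first exact: norm_hausdorff.
  exact: continuous_compact cg (@segment_compact R 1 2).
have avoid t : t1 <= t <= t2 -> ~ (~` (gamma @` `[1, 2])) (gamma t).
  by move=> ht; apply; exists t => //; rewrite /= in_itv /=; lra.
have cg12 := within_subitv_continuous (ltac:(lra) : 1 <= t1) (ltac:(lra) : t2 <= 2) cg.
exists 3; split; first exact: num_real.
move=> M hM z /(connected_component_polygonal oU U0)[L pL lz].
have [dl dl0 Wz] := winding_polygonal cg12 e avoid pL.
have [T sT W0] := near_gamma0_winding_origin near ht1 ht2 e dl0.
have inside : ~ (3 <= `|z.1| \/ 3 <= `|z.2|).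
  move=> /(halfplane_off_box (g := gamma) (c := t1) (d := t2))[t ht|n hn].
    by have [? ?] := near_gamma0_box near (ltac:(lra) : 1 <= t <= 2); split; lra.
  by have := winding_halfplane e sT hn; rewrite (Wz T sT) lz => W; move: W0; rewrite W ltxx.
by rewrite /= prod_normE ge_max; lra.
Qed.
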